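(* Let $M\ge\frac52$, $\mu=\frac{2}{2M+3}$, and consider Algorithm A run on an input whose optimal offline makespan is $1$. Fix any optimal offline schedule $S$ of the entire input (makespan $1$), and for each $j$ let $o_{j2}$ be the total size of those jobs among $1,\dots,j$ that $S$ assigns to $m_2$. Then for every $j\ge 0$, $y_j\ge \min\{1-\mu,\,o_{j2}\}$.
   Context: Model (two hierarchical machines with migration, bin stretching). Jobs $1,2,\dots,n$ arrive one by one ($n$ unknown in advance). Job $j$ has a size $p_j>0$ and a grade of service (GoS) $g_j\in\{1,2\}$; a job of GoS $1$ may only be processed on machine $m_1$, a job of GoS $2$ may be processed on $m_1$ or on $m_2$. The load of a machine is the total size of the jobs assigned to it, and the makespan is the maximum load. When job $j$ arrives, the algorithm must assign it to a machine, and at the same time it may reassign (migrate) previously arrived jobs to other machines (respecting the GoS constraints), provided that the total size of the migrated jobs is at most $M\cdot p_j$; $M\ge 0$ is the migration factor. Bin stretching: the optimal offline makespan of the complete input is known in advance and scaled to $1$. Notation: $Y_{j}$ is the set of jobs on $m_2$ just after job $j$ has been handled (including migrations), $y_j$ its total size, $y_0=0$. $Z$ denotes the set of GoS-2 jobs currently on $m_1$. Algorithm A (with $\mu=\frac{2}{2M+3}$). On arrival of job $j$: (i) if $g_j=1$ or $y_{j-1}\ge 1-\mu$, assign $j$ to $m_1$; (ii) else if $y_{j-1}+p_j\le 1+\mu$, assign $j$ to $m_2$; (iii) otherwise, among all GoS-2 jobs arrived so far (the current $Z$, the current $Y_{j-1}$, and $j$), choose a subset $W$ of maximum total size subject to total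 size at most $1$; rearrange so that exactly the jobs of $W$ are on $m_2$ and all other arrived jobs are on $m_1$. *)

From mathcomp Require Import all_boot all_order all_algebra.
Set Implicit Arguments. Unset Strict Implicit. Unset Printing Implicit Defensive.
Import Order.TTheory GRing.Theory Num.Theory.
Local Open Scope ring_scope.

Inductive gos := GoS1 | GoS2.
Definition is_gos2 (x : gos) : bool := if x is GoS2 then true else false.

Section Defs.
Variables (R : realFieldType) (n : nat).
(* Jobs are indexed by 'I_n in arrival order: job k (0-based) is the
   paper's job k+1. *)
Variables (p : 'I_n -> R) (g : 'I_n -> gos).

Definition load (A : {set 'I_n}) : R := \sum_(i in A) p i.

(* An offline schedule is given by the set S of jobs placed on m2
   (all others on m1); it is valid if it respects the GoS constraints. *)
Definition valid_schedule (S : {set 'I_n}) : Prop :=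
  forall i, i \in S -> g i = GoS2.

Definition makespan (S : {set 'I_n}) : R := Num.max (load (~: S)) (load S).

Definition opt_makespan_is_one : Prop :=
  (exists S, valid_schedule S /\ makespan S <= 1) /\
  (forall S, valid_schedule S -> 1 <= makespan S).

(* One step of Algorithm A, handling job k: Y is the set of jobs on m2
   before job k arrives, Y' the set just after job k is handled.
   (Arrived jobs not on m2 are on m1.) *)
Definition A_step (M : R) (k : 'I_n) (Y Y' : {set 'I_n}) : Prop :=
  let mu := 2 / (2 * M + 3) in
  let y := load Y in
  if ~~ is_gos2 (g k) || (1 - mu <= y) then Y' = Y
  else if y + p k <= 1 + mu then Y' = k |: Y
  else
    (* Z = GoS-2 jobs currently on m1 *)
    let Z := [set i : 'I_n | (i < k)%N && is_gos2 (g i) & i \notin Y] in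
    let C := Z :|: Y :|: [set k] in
    [/\ Y' \subset C, load Y' <= 1 &
        forall W : {set 'I_n}, W \subset C -> load W <= 1 -> load W <= load Y'].

(* Y : nat -> {set 'I_n} is a run of Algorithm A: Y j is the set Y_j of jobs
   on m2 just after job j (1-based) has been handled, Y 0 = empty. *)
Definition A_run (M : R) (Y : nat -> {set 'I_n}) : Prop :=
  Y 0%N = set0 /\
  forall (j : nat) (hj : (j < n)%N), A_step M (Ordinal hj) (Y j) (Y j.+1).

Definition o2 (S : {set 'I_n}) (j : nat) : R :=
  load [set i in S | (i < j)%N].

End Defs.

From mathcomp Require Import all_boot all_order all_algebra.
Set Implicit Arguments. Unset Strict Implicit. Unset Printing Implicit Defensive.
Import Order.TTheory GRing.Theory Num.Theory.
Local Open Scope ring_scope.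

(* By induction on j, carrying along that Y_j only contains jobs among
   1..j. If job j+1 goes to m1 because y_j >= 1 - mu or because it has GoS 1
   (so S cannot put it on m2 either), the bound is inherited; if it is added
   to m2, both sides grow by at most p_{j+1}. Otherwise the algorithm
   recomputes Y_{j+1} as a heaviest set of load at most 1 among all GoS-2
   jobs arrived so far; the jobs S puts on m2 among 1..j+1 form such a set,
   hence o_{(j+1)2} <= y_{j+1}. *)

Definition prefix (n j : nat) : {set 'I_n} := [set i : 'I_n | (i < j)%N].

Lemma prefix0 (n : nat) : prefix n 0 = set0.
Proof. by apply/setP => i; rewrite !inE ltn0. Qed.

Lemma prefixS (n : nat) (k : 'I_n) : prefix n k.+1 = k |: prefix n k.
Proof. by apply/setP => i; rewrite !inE ltnS leq_eqVlt. Qed.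

Lemma prefix_subS (n j : nat) : prefix n j \subset prefix n j.+1.
Proof. by apply/subsetP => i; rewrite !inE => /ltnW. Qed.

Lemma notin_prefix {n : nat} (k : 'I_n) : k \notin prefix n k.
Proof. by rewrite inE ltnn. Qed.

Section Loads.
Variables (R : realFieldType) (n : nat) (p : 'I_n -> R).

Lemma load_subset (A B : {set 'I_n}) :
  (forall i, 0 <= p i) -> A \subset B -> load p A <= load p B.
Proof.
move=> p_ge0 sAB; rewrite /load [X in _ <= X](big_setID A) /= (setIidPr sAB).
by rewrite lerDl sumr_ge0.
Qed.

Lemma load_setU1 (k : 'I_n) (A : {set 'I_n}) :
  k \notin A -> load p (k |: A) = p k + load p A.
Proof. exact: big_setU1. Qed.

Lemma o2E (S : {set 'I_n}) (j : nat) : o2 p S j = load p (S :&: prefix n j).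
Proof. by congr load; apply/setP => i; rewrite !inE. Qed.

Lemma o2S (S : {set 'I_n}) (k : 'I_n) :
  o2 p S k.+1 = (if k \in S then p k else 0) + o2 p S k.
Proof.
rewrite !o2E prefixS setIUr; case: ifP => kS.
  rewrite (setIidPr _) ?sub1set // load_setU1 // inE negb_and.
  by rewrite notin_prefix orbT.
by rewrite (disjoint_setI0 _) ?set0U ?add0r // disjoint_sym disjoints1 kS.
Qed.

End Loads.

Section OneStep.
Variables (R : realFieldType) (n : nat) (p : 'I_n -> R) (g : 'I_n -> gos).
Variables (M : R) (S : {set 'I_n}).
Hypothesis p_gt0 : forall i, 0 < p i.
Hypothesis S_valid : valid_schedule g S.
Hypothesis S_load : load p S <= 1.

Let mu := 2 / (2 * M + 3).

Lemma A_step_prefix (k : 'I_n) (Y Y' : {set 'I_n}) :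
  Y \subset prefix n k -> A_step p g M k Y Y' -> Y' \subset prefix n k.+1.
Proof.
move=> sYk; have sYk1 := subset_trans sYk (prefix_subS n k).
rewrite /A_step; case: ifP => [_ -> // | _].
case: ifP => [_ -> | _ [sY'C _ _]]; first by rewrite prefixS setUS.
apply: (subset_trans sY'C); rewrite !subUset sYk1 andbT sub1set inE ltnSn andbT.
by apply/subsetP => i; rewrite !inE => /andP[/andP[/ltnW ? _] _].
Qed.

Lemma A_step_lower_bound (k : 'I_n) (Y Y' : {set 'I_n}) :
  Y \subset prefix n k -> A_step p g M k Y Y' ->
  Num.min (1 - mu) (o2 p S k) <= load p Y ->
  Num.min (1 - mu) (o2 p S k.+1) <= load p Y'.
Proof.
move=> sYk; rewrite /A_step -/mu; case: ifP => [saturated -> | _].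
  rewrite o2S; case/orP: saturated => [gos1 | full _]; last by rewrite ge_min full.
  suff -> : k \in S = false by rewrite add0r.
  by apply/negbTE/negP => /S_valid gk; rewrite gk in gos1.
case: ifP => [_ -> | _ [sY'C Y'_le1 Y'_max] _].
  rewrite o2S load_setU1; last exact: contra (subsetP sYk k) (notin_prefix k).
  have pk_ge0 := ltW (p_gt0 k); rewrite !ge_min => /orP[old | old]; apply/orP.
    by left; apply: (le_trans old); rewrite lerDr.
  by right; rewrite lerD //; case: ifP.
have sSC : S :&: prefix n k.+1 \subset
    [set i : 'I_n | (i < k)%N && is_gos2 (g i) & i \notin Y] :|: Y :|: [set k].
  apply/subsetP => i; rewrite prefixS !inE => /andP[/S_valid gi].
  case/orP => [-> | ik]; first by rewrite orbT.
  by rewrite ik gi /=; case: (i \in Y); rewrite ?orbT.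
have o2_le1 : load p (S :&: prefix n k.+1) <= 1.
  by apply: le_trans S_load; apply: load_subset (subsetIl _ _) => i; exact: ltW.
by rewrite o2E ge_min (Y'_max _ sSC o2_le1) orbT.
Qed.

End OneStep.

Theorem mainTheorem2 (R : realFieldType) (n : nat) (p : 'I_n -> R)
    (g : 'I_n -> gos) (M : R) (Y : nat -> {set 'I_n}) (S : {set 'I_n}) :
  5 / 2 <= M ->
  (forall i, 0 < p i) ->
  opt_makespan_is_one p g ->
  valid_schedule g S -> makespan p S = 1 ->
  A_run p g M Y ->
  forall j : nat, (j <= n)%N ->
    Num.min (1 - 2 / (2 * M + 3)) (o2 p S j) <= load p (Y j).
Proof.
move=> _ p_gt0 _ S_valid S_makespan [Y0 run].
have S_load : load p S <= 1 by rewrite -S_makespan le_max lexx orbT.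
suff inv j : (j <= n)%N -> Y j \subset prefix n j /\
    Num.min (1 - 2 / (2 * M + 3)) (o2 p S j) <= load p (Y j).
  by move=> j /inv[].
elim: j => [_ | j IH jn].
  by rewrite Y0 sub0set o2E prefix0 setI0 /load big_set0 ge_min lexx orbT.
have [sYj bound] := IH (ltnW jn).
split; first exact: (A_step_prefix (k := Ordinal jn) sYj (run j jn)).
exact: (A_step_lower_bound p_gt0 S_valid S_load (k := Ordinal jn) sYj
  (run j jn) bound).
Qed.
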